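(* If $f$ satisfies the rate conditions of order $0$ and $z_1,z_2\in D$ satisfy $z_1\in J_s(z_2,1/L)$ and $f(z_1)\in J_s(f(z_2),1/L)$, then $\|\pi_y(f(z_1)-f(z_2))\|\le\mu_{s,1}\|\pi_y(z_1-z_2)\|$.
   Context: $c,u,s$ positive integers, $\Lambda=(\mathbb{R}/\mathbb{Z})^c$, $R_\Lambda=\tfrac12$; points are ''in the same chart'' if their $\lambda$-components have lifts to $\mathbb{R}^c$ at distance $\le R_\Lambda$; differences, norms, cones and derivatives are computed in such lifts. $\overline B_n(R)$ closed ball at $0$; Euclidean norms. $0<R<R_\Lambda/2$, $D=\Lambda\times\overline B_u(R)\times\overline B_s(R)$, $z=(\lambda,x,y)$, projections $\pi_\lambda,\pi_x,\pi_y,\pi_{(\lambda,x)}$; $f:D\to\Lambda\times\mathbb{R}^u\times\mathbb{R}^s$ is $C^1$, $f=(f_\lambda,f_x,f_y)$. $m(A)=\max\{c:\|Av\|\ge c\|v\|\}$, $m(\mathbf A)=\inf_{A\in\mathbf A}m(A)$; $[\partial g/\partial w(U)]$ = set of matrices with $(i,j)$ entry in $[\inf_U\partial g_i/\partial w_j,\sup_U\partial g_i/\partial w_j]$; $P(z)=\{w\in D:\|\pi_\lambda w-\pi_\lambda z\|\le R_\Lambda/2\}$. Fix $L\in(2R/R_\Lambda,1)$. $\mu_{s,1}=\sup_D\{\|\partial_yf_y\|+\frac1L\|\partial_{(\lambda,x)}f_y\|\}$, $\xi_{u,1,P}=\inf_{z\in D}m[\partial_xf_x(P(z))]-\frac1L\sup_D\|\partial_{(\lambda,y)}f_x\|$,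 $\mu_{cs,1}=\sup_D\{\|\partial_{(\lambda,y)}f_{(\lambda,y)}\|+L\|\partial_xf_{(\lambda,y)}\|\}$, $\xi_{cu,1,P}=\inf_{z\in D}m[\partial_{(\lambda,x)}f_{(\lambda,x)}(P(z))]-L\sup_D\|\partial_yf_{(\lambda,x)}\|$. Rate conditions of order $0$: $\mu_{s,1}<1<\xi_{u,1,P}$, $\mu_{cs,1}<\xi_{u,1,P}$, $\mu_{s,1}<\xi_{cu,1,P}$. $J_s(z,M)=\{(\lambda,x,y):\|(\lambda,x)-\pi_{(\lambda,x)}z\|\le M\|y-\pi_yz\|\}$. *)

From HB Require Import structures.
From mathcomp Require Import all_boot all_order all_algebra.
From mathcomp Require Import all_classical all_reals all_analysis.
Set Implicit Arguments. Unset Strict Implicit. Unset Printing Implicit Defensive.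
Import Order.TTheory GRing.Theory Num.Theory.
Import numFieldNormedType.Exports.
Local Open Scope classical_set_scope.
Local Open Scope ring_scope.

(* Lifted phase space R^c x R^u x R^s ; a point z = ((lambda, x), y). *)
Definition pt (R : realType) (c u s : nat) : Type :=
  ('rV[R]_c * 'rV[R]_u * 'rV[R]_s)%type.

Section Defs.
Context {R : realType} {c u s : nat}.

Definition enorm {m n : nat} (A : 'M[R]_(m, n)) : R :=
  Num.sqrt (\sum_(i < m) \sum_(j < n) A i j ^+ 2).

Definition opnorm {m n : nat} (A : 'M[R]_(m, n)) : R :=
  sup [set enorm (A *m v) | v in [set v : 'cV[R]_n | enorm v <= 1]].

Definition mlow {m n : nat} (A : 'M[R]_(m, n)) : R :=
  sup [set k : R | forall v : 'cV[R]_n, k * enorm v <= enorm (A *m v)].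

Definition mlowset {m n : nat} (AA : set 'M[R]_(m, n)) : R :=
  inf [set mlow A | A in AA].

Definition imat {m n : nat} (G : pt R c u s -> 'M[R]_(m, n)) (U : set (pt R c u s))
  : set 'M[R]_(m, n) :=
  [set A | forall i j, inf [set G w i j | w in U] <= A i j /\
                       A i j <= sup [set G w i j | w in U]].

Definition intvec {n : nat} (k : 'rV[int]_n) : 'rV[R]_n := map_mx (fun a => a%:~R) k.

Definition inD (Rr : R) (z : pt R c u s) : Prop :=
  enorm z.1.2 <= Rr /\ enorm z.2 <= Rr.

Definition Dset (Rr : R) : set (pt R c u s) := [set z | inD Rr z].

(* P(z) = { w in D : ||pi_lambda w - pi_lambda z|| <= R_Lambda/2 } (torus distance) *)
Definition Pset (Rr : R) (z : pt R c u s) : set (pt R c u s) :=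
  [set w | inD Rr w /\
     exists k : 'rV[int]_c, enorm (w.1.1 + intvec k - z.1.1) <= 1 / 4].

(* w in J_s(z, M): in the same chart (lifts at distance <= R_Lambda = 1/2),
   with ||(lambda,x) - pi_(lambda,x) z|| <= M ||y - pi_y z|| computed in those lifts *)
Definition Js (z : pt R c u s) (M : R) (w : pt R c u s) : Prop :=
  exists k : 'rV[int]_c,
    enorm (w.1.1 + intvec k - z.1.1) <= 1 / 2 /\
    enorm (row_mx (w.1.1 + intvec k - z.1.1) (w.1.2 - z.1.2)) <= M * enorm (w.2 - z.2).

Definition el (j : 'I_c) : pt R c u s := ((delta_mx 0 j, 0), 0).
Definition ex (j : 'I_u) : pt R c u s := ((0, delta_mx 0 j), 0).
Definition ey (j : 'I_s) : pt R c u s := ((0, 0), delta_mx 0 j).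

Definition is_C1 (F : pt R c u s -> pt R c u s) : Prop :=
  (forall z, differentiable F z) /\
  (forall v : pt R c u s, continuous (fun z => 'D_v F z)).

Definition is_lift (F : pt R c u s -> pt R c u s) : Prop :=
  forall (k : 'rV[int]_c) (z : pt R c u s),
    let z' := ((z.1.1 + intvec k, z.1.2), z.2) in
    (exists k' : 'rV[int]_c, (F z').1.1 = (F z).1.1 + intvec k') /\
    (F z').1.2 = (F z).1.2 /\ (F z').2 = (F z).2.

Section Jacobian.
Variable F : pt R c u s -> pt R c u s.
Let Fl z := (F z).1.1.
Let Fx z := (F z).1.2.
Let Fy z := (F z).2.

Definition dl_fl z : 'M[R]_(c, c) := \matrix_(i, j) ('D_(el j) Fl z) 0 i.
Definition dx_fl z : 'M[R]_(c, u) := \matrix_(i, j) ('D_(ex j) Fl z) 0 i.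
Definition dy_fl z : 'M[R]_(c, s) := \matrix_(i, j) ('D_(ey j) Fl z) 0 i.
Definition dl_fx z : 'M[R]_(u, c) := \matrix_(i, j) ('D_(el j) Fx z) 0 i.
Definition dx_fx z : 'M[R]_(u, u) := \matrix_(i, j) ('D_(ex j) Fx z) 0 i.
Definition dy_fx z : 'M[R]_(u, s) := \matrix_(i, j) ('D_(ey j) Fx z) 0 i.
Definition dl_fy z : 'M[R]_(s, c) := \matrix_(i, j) ('D_(el j) Fy z) 0 i.
Definition dx_fy z : 'M[R]_(s, u) := \matrix_(i, j) ('D_(ex j) Fy z) 0 i.
Definition dy_fy z : 'M[R]_(s, s) := \matrix_(i, j) ('D_(ey j) Fy z) 0 i.

Definition dlx_fy z : 'M[R]_(s, c + u) := row_mx (dl_fy z) (dx_fy z).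
Definition dly_fx z : 'M[R]_(u, c + s) := row_mx (dl_fx z) (dy_fx z).
Definition dly_fly z : 'M[R]_(c + s, c + s) :=
  block_mx (dl_fl z) (dy_fl z) (dl_fy z) (dy_fy z).
Definition dx_fly z : 'M[R]_(c + s, u) := col_mx (dx_fl z) (dx_fy z).
Definition dlx_flx z : 'M[R]_(c + u, c + u) :=
  block_mx (dl_fl z) (dx_fl z) (dl_fx z) (dx_fx z).
Definition dy_flx z : 'M[R]_(c + u, s) := col_mx (dy_fl z) (dy_fx z).

Variables (Rr L : R).

Definition mu_s1 : R :=
  sup [set opnorm (dy_fy z) + L^-1 * opnorm (dlx_fy z) | z in Dset Rr].
Definition xi_u1P : R :=
  inf [set mlowset (imat dx_fx (Pset Rr z)) | z in Dset Rr]
  - L^-1 * sup [set opnorm (dly_fx z) | z in Dset Rr].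
Definition mu_cs1 : R :=
  sup [set opnorm (dly_fly z) + L * opnorm (dx_fly z) | z in Dset Rr].
Definition xi_cu1P : R :=
  inf [set mlowset (imat dlx_flx (Pset Rr z)) | z in Dset Rr]
  - L * sup [set opnorm (dy_flx z) | z in Dset Rr].

Definition rate_conditions_0 : Prop :=
  mu_s1 < 1 /\ 1 < xi_u1P /\ mu_cs1 < xi_u1P /\ mu_s1 < xi_cu1P.
End Jacobian.
End Defs.

From HB Require Import structures.
From mathcomp Require Import all_boot all_order all_algebra.
From mathcomp Require Import all_classical all_reals all_analysis.
From mathcomp Require Import ring lra.
Set Implicit Arguments. Unset Strict Implicit. Unset Printing Implicit Defensive.
Import Order.TTheory GRing.Theory Num.Theory.
Import numFieldNormedType.Exports.
Local Open Scope classical_set_scope.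
Local Open Scope ring_scope.

(* Along the segment from z2 to the lift of z1 lying in the same chart, the mean
   value theorem applied to t |-> <W, F_y(z2 + t d)>, with W the increment of F_y,
   bounds |F_y(z1) - F_y(z2)| by the norm of a directional derivative of F_y at a
   point q of D.  Split that derivative into the blocks d_y F_y and
   d_(lambda,x) F_y; the cone condition bounds the (lambda,x)-displacement by 1/L
   times the y-displacement, which yields the factor
   |d_y F_y(q)| + |d_(lambda,x) F_y(q)| / L <= mu_s1.  As lambda ranges over all
   of R^c, this needs the supremum defining mu_s1 to be finite: the partial
   derivatives are continuous and Z^c-periodic, hence bounded by their maximum on
   a compact fundamental box. *)

Lemma uniform_bound_fin {R : realType} {T : Type} {I : finType} (P : T -> Prop)
    (g : I -> T -> R) :
  (forall i, exists M, forall z, P z -> `|g i z| <= M) ->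
  exists M, forall i z, P z -> `|g i z| <= M.
Proof.
move=> /choice[M g_le]; exists (\big[Num.max/0]_i M i) => i z Pz.
exact: le_trans (g_le i z Pz) (le_bigmax _ _ _).
Qed.

Section EuclideanNorm.
Context {R : realType}.

Lemma sqr_sum_mul_le (I : finType) (f g : I -> R) :
  (\sum_i f i * g i) ^+ 2 <= (\sum_i f i ^+ 2) * (\sum_i g i ^+ 2).
Proof.
pose T i j := f i ^+ 2 * g j ^+ 2; pose S i j := (f i * g i) * (f j * g j).
have lagrange : \sum_i \sum_j (f i * g j - f j * g i) ^+ 2 =
    (\sum_i \sum_j T i j + \sum_i \sum_j T j i) - 2 * \sum_i \sum_j S i j.
  rewrite mulr_sumr -big_split -sumrB /=; apply: eq_bigr => i _.
  rewrite mulr_sumr -big_split -sumrB /=; apply: eq_bigr => j _.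
  by rewrite /T /S /=; ring.
have -> : (\sum_i f i ^+ 2) * (\sum_i g i ^+ 2) = \sum_i \sum_j T i j.
  exact: big_distrlr.
have -> : (\sum_i f i * g i) ^+ 2 = \sum_i \sum_j S i j.
  by rewrite expr2 big_distrlr.
have : 0 <= \sum_i \sum_j (f i * g j - f j * g i) ^+ 2.
  by do 2![apply: sumr_ge0 => ? _]; exact: sqr_ge0.
by rewrite lagrange [\sum_i \sum_j T j i]exchange_big /=; lra.
Qed.

Lemma enorm_ge0 m n (A : 'M[R]_(m, n)) : 0 <= enorm A.
Proof. exact: sqrtr_ge0. Qed.

Lemma enorm_sqr m n (A : 'M[R]_(m, n)) : enorm A ^+ 2 = \sum_i \sum_j A i j ^+ 2.
Proof.
by rewrite sqr_sqrtr // sumr_ge0 // => i _; rewrite sumr_ge0 // => j _; exact: sqr_ge0.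
Qed.

Lemma ler_mul_of_sqr (x a b : R) : 0 <= a -> 0 <= b ->
  x ^+ 2 <= a ^+ 2 * b ^+ 2 -> x <= a * b.
Proof.
move=> a_ge0 b_ge0 le_sq; apply: le_trans (ler_norm x) _.
by rewrite -(@ler_pXn2r _ 2) ?nnegrE ?mulr_ge0 // real_normK ?num_real // exprMn.
Qed.

Lemma mx_dot_le_enorm m n (A B : 'M[R]_(m, n)) :
  \sum_i \sum_j A i j * B i j <= enorm A * enorm B.
Proof.
apply: ler_mul_of_sqr; rewrite ?enorm_ge0 // !enorm_sqr !pair_bigA.
exact: sqr_sum_mul_le.
Qed.

Lemma mxentry_le_enorm m n (A : 'M[R]_(m, n)) i j : `|A i j| <= enorm A.
Proof.
rewrite -(@ler_pXn2r _ 2) ?nnegrE ?enorm_ge0 // real_normK ?num_real // enorm_sqr.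
rewrite pair_bigA (bigD1 (i, j)) //= lerDl.
by apply: sumr_ge0 => p _; exact: sqr_ge0.
Qed.

Lemma enorm_eq0 m n (A : 'M[R]_(m, n)) : enorm A = 0 -> A = 0.
Proof.
move=> A0; apply/matrixP => i j; apply/eqP.
by rewrite mxE -normr_le0 -A0 mxentry_le_enorm.
Qed.

Lemma enormZ m n (a : R) (A : 'M[R]_(m, n)) : enorm (a *: A) = `|a| * enorm A.
Proof.
rewrite -sqrtr_sqr -sqrtrM ?sqr_ge0 // mulr_sumr; congr Num.sqrt.
by apply: eq_bigr => i _; rewrite mulr_sumr; apply: eq_bigr => j _; rewrite mxE exprMn.
Qed.

Lemma enorm0 m n : enorm (0 : 'M[R]_(m, n)) = 0.
Proof. by rewrite -(scale0r 0) enormZ normr0 mul0r. Qed.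

Lemma enormD m n (A B : 'M[R]_(m, n)) : enorm (A + B) <= enorm A + enorm B.
Proof.
have expand : enorm (A + B) ^+ 2 =
    enorm A ^+ 2 + 2 * \sum_i \sum_j A i j * B i j + enorm B ^+ 2.
  rewrite !enorm_sqr mulr_sumr -!big_split; apply: eq_bigr => i _.
  rewrite mulr_sumr -!big_split; apply: eq_bigr => j _.
  by rewrite mxE /=; ring.
rewrite -(@ler_pXn2r _ 2) ?nnegrE ?addr_ge0 ?enorm_ge0 // expand.
have := mx_dot_le_enorm A B; nra.
Qed.

Lemma enorm_tr m n (A : 'M[R]_(m, n)) : enorm A^T = enorm A.
Proof.
by rewrite /enorm exchange_big; congr Num.sqrt; do 2!apply: eq_bigr => ? _; rewrite mxE.
Qed.

Lemma enorm_mulmx m n p (A : 'M[R]_(m, n)) (B : 'M[R]_(n, p)) :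
  enorm (A *m B) <= enorm A * enorm B.
Proof.
apply: ler_mul_of_sqr; rewrite ?enorm_ge0 // !enorm_sqr.
apply: le_trans (_ : \sum_i \sum_k (\sum_j A i j ^+ 2) * (\sum_j B j k ^+ 2) <= _).
  by do 2![apply: ler_sum => ? _]; rewrite mxE; exact: sqr_sum_mul_le.
by rewrite [X in _ <= _ * X]exchange_big big_distrlr.
Qed.

Lemma enorm_le_entrywise m n (A : 'M[R]_(m, n)) (C : R) :
  (forall i j, `|A i j| <= C) -> enorm A <= Num.sqrt ((m * n)%:R * C ^+ 2).
Proof.
move=> A_le; rewrite ler_sqrt; last by rewrite mulr_ge0 ?sqr_ge0.
have -> : (m * n)%:R * C ^+ 2 = \sum_(i < m) \sum_(j < n) C ^+ 2.
  by rewrite !sumr_const !card_ord -mulrnA mulr_natl mulnC.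
apply: ler_sum => i _; apply: ler_sum => j _.
have C_ge0 := le_trans (normr_ge0 _) (A_le i j).
by rewrite -real_normK ?num_real // ler_sqr ?nnegrE ?A_le.
Qed.

Lemma enorm_segment_le m n (a b : 'M[R]_(m, n)) (r t : R) : 0 <= t <= 1 ->
  enorm a <= r -> enorm b <= r -> enorm (t *: (a - b) + b) <= r.
Proof.
move=> /andP[t_ge0 t_le1] a_le b_le.
have -> : t *: (a - b) + b = t *: a + (1 - t) *: b.
  by apply/matrixP => i j; rewrite !mxE; ring.
apply: le_trans (enormD _ _) _; rewrite !enormZ !ger0_norm ?subr_ge0 //.
have := ler_wpM2l t_ge0 a_le; have := ler_wpM2l (_ : 0 <= 1 - t) b_le.
by rewrite subr_ge0 => /(_ t_le1); lra.
Qed.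

End EuclideanNorm.

Section OperatorNorm.
Context {R : realType}.

Lemma has_sup_opnorm m n (A : 'M[R]_(m, n)) :
  has_sup [set enorm (A *m v) | v in [set v : 'cV[R]_n | enorm v <= 1]].
Proof.
split; first by exists 0, 0; rewrite /= ?enorm0 ?ler01 // mulmx0 enorm0.
exists (enorm A) => _ [v /= v1 <-]; apply: le_trans (enorm_mulmx A v) _.
by rewrite ler_piMr ?enorm_ge0.
Qed.

Lemma opnorm_ge0 m n (A : 'M[R]_(m, n)) : 0 <= opnorm A.
Proof.
apply: sup_upper_bound; first exact: has_sup_opnorm.
by exists 0; rewrite /= ?enorm0 ?ler01 // mulmx0 enorm0.
Qed.

Lemma opnorm_le_enorm m n (A : 'M[R]_(m, n)) : opnorm A <= enorm A.
Proof.
apply: ge_sup; first by case: (has_sup_opnorm A).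
move=> _ [v /= v1 <-]; apply: le_trans (enorm_mulmx A v) _.
by rewrite ler_piMr ?enorm_ge0.
Qed.

Lemma enorm_mulmx_le_opnorm m n (A : 'M[R]_(m, n)) (v : 'cV[R]_n) :
  enorm (A *m v) <= opnorm A * enorm v.
Proof.
have [->|v_neq0] := eqVneq v 0; first by rewrite mulmx0 !enorm0 mulr0.
have v_gt0 : 0 < enorm v.
  by rewrite lt_def enorm_ge0 andbT; apply: contra_neq v_neq0; exact: enorm_eq0.
have unit_v : enorm (A *m ((enorm v)^-1 *: v)) <= opnorm A.
  apply: sup_upper_bound; first exact: has_sup_opnorm.
  exists ((enorm v)^-1 *: v) => //=.
  by rewrite enormZ ger0_norm ?invr_ge0 ?enorm_ge0 // mulVf ?gt_eqF.
move: unit_v; rewrite -scalemxAr enormZ ger0_norm ?invr_ge0 ?enorm_ge0 //.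
by rewrite mulrC -ler_pdivlMr ?invr_gt0 // invrK.
Qed.

End OperatorNorm.

Section MeanValue.
Context {R : realType}.

Lemma is_derive_mxentry m n (G : R -> 'M[R]_(m, n)) (t : R) (dG : 'M[R]_(m, n)) i j :
  is_derive t (1 : R) G dG -> is_derive t (1 : R) (fun x => G x i j) (dG i j).
Proof.
move=> [derG <-]; apply: DeriveDef; first by move/derivable_mxP: derG; apply.
by rewrite derive_mx // mxE.
Qed.

Lemma enorm_sub_le_derive m n (G G' : R -> 'M[R]_(m, n)) :
  (forall t, is_derive t (1 : R) G (G' t)) ->
  exists2 xi, 0 < xi < 1 & enorm (G 1 - G 0) <= enorm (G' xi).
Proof.
move=> derG; pose W := G 1 - G 0.
pose phi : R -> R := \sum_i \sum_j (fun t => W i j * G t i j).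
pose dphi t := \sum_i \sum_j W i j * G' t i j.
have derphi (t : R) : is_derive t (1 : R) phi (dphi t).
  do 2![apply: is_derive_sum => ?]; apply: is_deriveZ; exact: is_derive_mxentry.
have phi_cont : {within `[0, 1], continuous phi}.
  apply: continuous_subspaceT => t; apply: differentiable_continuous.
  by apply/derivable1_diffP; case: (derphi t).
have [xi /[!in_itv] /= xi01 phi_mvt] := MVT ltr01 (fun t _ => derphi t) phi_cont.
exists xi => //; rewrite -/W.
have phiW : phi 1 - phi 0 = enorm W ^+ 2.
  rewrite /phi enorm_sqr !fct_sumE -sumrB; apply: eq_bigr => i _.
  rewrite !fct_sumE -sumrB; apply: eq_bigr => j _.
  by rewrite -mulrBr /W !mxE expr2.
have dphi_le : dphi xi <= enorm W * enorm (G' xi) := mx_dot_le_enorm W (G' xi).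
move: phi_mvt; rewrite phiW subr0 mulr1 => W_sq.
by have := enorm_ge0 W; have := enorm_ge0 (G' xi); nra.
Qed.

End MeanValue.

Lemma is_derive_line (R : realType) (V W : normedModType R) (f : V -> W)
    (a d : V) (t : R) :
  derivable f (t *: d + a) d ->
  is_derive t (1 : R) (fun x => f (x *: d + a)) ('D_d f (t *: d + a)).
Proof.
have quot : (fun h : R => h^-1 *: (f ((h *: 1 + t) *: d + a) - f (t *: d + a))) =
    (fun h : R => h^-1 *: (f (h *: d + (t *: d + a)) - f (t *: d + a))).
  by apply: funext => h; rewrite [h *: 1]mulr1 scalerDl addrA.
by move=> derf; apply: DeriveDef; rewrite /derivable /derive /= ?quot.
Qed.

Section PhaseSpace.
Context {R : realType} {c u s : nat}.
Implicit Types (z v : pt R c u s) (F : pt R c u s -> pt R c u s).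

Definition translate (k : 'rV[int]_c) z : pt R c u s :=
  ((z.1.1 + intvec k, z.1.2), z.2).

Lemma addr_translate k v z : v + translate k z = translate k (v + z).
Proof. by case: v z => [[? ?] ?] [[? ?] ?]; congr ((_, _), _); rewrite /= addrA. Qed.

Lemma lift_snd F k z : is_lift F -> (F (translate k z)).2 = (F z).2.
Proof. by move=> /(_ k z) [_ []]. Qed.

Lemma lift_derive_snd F k z v : is_lift F ->
  'D_v (fun w => (F w).2) (translate k z) = 'D_v (fun w => (F w).2) z.
Proof.
move=> liftF; rewrite /derive; do 3!f_equal; apply: funext => h /=.
by rewrite addr_translate !lift_snd.
Qed.

Lemma is_derive_snd F z v : derivable F z v ->
  is_derive z v (fun w => (F w).2) ('D_v F z).2.
Proof.
move=> derF.
have quot_snd :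
    (fun h : R => h^-1 *: ((F (h *: v + z)).2 - (F z).2)) @ 0^' --> ('D_v F z).2.
  exact: (cvg_comp _ _ derF cvg_snd).
by apply: DeriveDef; [apply/cvg_ex; exists ('D_v F z).2 | exact: cvg_lim].
Qed.

Lemma continuous_derive_snd_entry F v i : is_C1 F ->
  continuous (fun z => ('D_v (fun w => (F w).2) z) ord0 i).
Proof.
move=> [diffF contF] z.
have -> : (fun z => ('D_v (fun w => (F w).2) z) ord0 i) =
    (fun M : 'rV[R]_s => M ord0 i) \o snd \o (fun z => 'D_v F z).
  apply: funext => w /=.
  by have [_ ->] := is_derive_snd (diff_derivable (v := v) (diffF w)).
apply: continuous_comp; first exact: contF.
by apply: continuous_comp; [exact: cvg_snd | exact: coord_continuous].
Qed.

Lemma inD_segment Rr (a b : pt R c u s) (t : R) : 0 <= t <= 1 ->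
  inD Rr a -> inD Rr b -> inD Rr (t *: (a - b) + b).
Proof. by move=> t01 [ax ay] [bx by_]; split; exact: enorm_segment_le. Qed.

Definition unit_cube n : set 'rV[R]_n :=
  [set v | forall i, `[(-1 : R), 1]%classic (v ord0 i)].
Arguments unit_cube : clear implicits.

Definition fundamental_box : set (pt R c u s) :=
  unit_cube c `*` unit_cube u `*` unit_cube s.

Lemma compact_unit_cube n : compact (unit_cube n).
Proof.
by apply: (rV_compact (A := fun=> `[(-1 : R), 1]%classic)) => _; exact: segment_compact.
Qed.

Lemma compact_fundamental_box : compact fundamental_box.
Proof. by apply: compact_setX; [apply: compact_setX|]; exact: compact_unit_cube. Qed.

Lemma translate_into_box Rr z : Rr <= 1 -> inD Rr z ->
  exists k, fundamental_box (translate k z).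
Proof.
move=> Rr_le1 [x_le y_le].
have in_cube n (v : 'rV[R]_n) i : enorm v <= Rr -> `[(-1 : R), 1]%classic (v ord0 i).
  move=> v_le; have := mxentry_le_enorm v ord0 i.
  by rewrite /= in_itv /= -ler_norml => ?; lra.
exists (\row_i (- Num.floor (z.1.1 ord0 i))).
split; [split|] => i /=; last exact: in_cube.
  rewrite !mxE in_itv /= intrN; have /andP[] := floor_itv (z.1.1 ord0 i).
  by rewrite intrD => ? ?; apply/andP; split; lra.
exact: in_cube.
Qed.

Lemma periodic_bounded_on_D (g : pt R c u s -> R) Rr : Rr <= 1 ->
  continuous g -> (forall k z, g (translate k z) = g z) ->
  exists M, forall z, inD Rr z -> `|g z| <= M.
Proof.
move=> Rr_le1 g_cont g_per.
have box_ne : fundamental_box !=set0.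
  by exists 0; split; [split|] => i; rewrite /= mxE in_itv /= lerN10 ler01.
have normg_cont : continuous (fun z => `|g z|).
  by move=> z; apply: continuous_comp; [exact: g_cont | exact: norm_continuous].
have [z0 _ z0_max] := compact_EVT_max box_ne compact_fundamental_box
  (continuous_subspaceT normg_cont).
exists `|g z0| => z zD; have [k box_z] := translate_into_box Rr_le1 zD.
by rewrite -(g_per k z); apply: z0_max; rewrite inE.
Qed.

End PhaseSpace.

Section PartialDerivatives.
Context {R : realType} {c u s : nat}.
Implicit Types (z v d : pt R c u s) (F : pt R c u s -> pt R c u s).

Definition basis_vec (j : 'I_c + 'I_u + 'I_s) : pt R c u s :=
  match j with inl (inl a) => el a | inl (inr b) => ex b | inr y => ey y end.

Lemma derive_blocks_bounded F Rr : is_C1 F -> is_lift F -> Rr <= 1 ->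
  exists C, forall z, inD Rr z ->
    (forall i j, `|dy_fy F z i j| <= C) /\ (forall i j, `|dlx_fy F z i j| <= C).
Proof.
move=> C1F liftF Rr_le1.
have [C C_ge] : exists C, forall (ij : 'I_s * ('I_c + 'I_u + 'I_s)) z, inD Rr z ->
    `|('D_(basis_vec ij.2) (fun w => (F w).2) z) ord0 ij.1| <= C.
  apply: uniform_bound_fin => ij; apply: periodic_bounded_on_D Rr_le1 _ _.
    exact: continuous_derive_snd_entry.
  by move=> k z; rewrite lift_derive_snd.
exists C => z zD; split=> i j; first by rewrite mxE; exact: (C_ge (i, inr j)).
rewrite /dlx_fy -[j]splitK.
case: (fintype.split j) => k; rewrite ?row_mxEl ?row_mxEr mxE.
  exact: (C_ge (i, inl (inl k))).
exact: (C_ge (i, inl (inr k))).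
Qed.

Lemma local_rate_le_mu_s1 F Rr L z : is_C1 F -> is_lift F -> Rr <= 1 -> 0 <= L ->
  inD Rr z -> opnorm (dy_fy F z) + L^-1 * opnorm (dlx_fy F z) <= mu_s1 F Rr L.
Proof.
move=> C1F liftF Rr_le1 L_ge0 zD.
have [C C_ge] := derive_blocks_bounded C1F liftF Rr_le1.
apply: sup_upper_bound; last by exists z.
split; first by exists (opnorm (dy_fy F z) + L^-1 * opnorm (dlx_fy F z)), z.
exists (Num.sqrt ((s * s)%:R * C ^+ 2) +
        L^-1 * Num.sqrt ((s * (c + u))%:R * C ^+ 2)).
move=> _ [w wD <-]; have [dy_le dlx_le] := C_ge w wD.
apply: lerD; last apply: ler_wpM2l; rewrite ?invr_ge0 //;
  apply: le_trans (opnorm_le_enorm _) _; exact: enorm_le_entrywise.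
Qed.

Lemma pt_basis_decomp d :
  d = \sum_j d.1.1 ord0 j *: el j + \sum_j d.1.2 ord0 j *: ex j
      + \sum_j d.2 ord0 j *: ey j.
Proof.
have sum_scale0 n m (a : 'I_n -> R) : \sum_j a j *: (0 : 'rV[R]_m) = 0.
  by apply: big1 => j _; exact: scaler0.
case: d => [[l x] y]; congr ((_, _), _);
  rewrite /= !(raddf_sum fst, raddf_sum snd) /= !sum_scale0 ?addr0 ?add0r;
  exact: row_sum_delta.
Qed.

Lemma derive_snd_blocks F q d : differentiable F q ->
  ('D_d (fun w => (F w).2) q)^T =
    dy_fy F q *m d.2^T + dlx_fy F q *m (row_mx d.1.1 d.1.2)^T.
Proof.
move=> diffF.
have D_snd v : 'D_v (fun w => (F w).2) q = ('d F q v).2.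
  by have [_ ->] := is_derive_snd (diff_derivable (v := v) diffF); rewrite deriveE.
rewrite /dlx_fy tr_row_mx mul_row_col D_snd {1}[d]pt_basis_decomp !linearD /=.
rewrite !raddf_sum /=; apply/matrixP => i k; rewrite (ord1 k).
rewrite !(mxE, summxE) [RHS]addrC.
by congr (_ + _ + _); apply: eq_bigr => j _; rewrite !mxE D_snd linearZ /= mxE mulrC.
Qed.

Lemma enorm_derive_snd_le F q d : differentiable F q ->
  enorm ('D_d (fun w => (F w).2) q) <=
    opnorm (dy_fy F q) * enorm d.2 +
    opnorm (dlx_fy F q) * enorm (row_mx d.1.1 d.1.2).
Proof.
move=> diffF; rewrite -enorm_tr derive_snd_blocks //.
apply: le_trans (enormD _ _) _.
by apply: lerD; rewrite -[enorm (_ : 'rV_ _)]enorm_tr; exact: enorm_mulmx_le_opnorm.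
Qed.

End PartialDerivatives.

Theorem lemma4p6 (R : realType) (c u s : nat) (Rr L : R)
  (F : pt R c u s -> pt R c u s) (z1 z2 : pt R c u s) :
  (0 < c)%N -> (0 < u)%N -> (0 < s)%N ->
  0 < Rr -> Rr < 1 / 4 ->
  2 * Rr / (1 / 2) < L -> L < 1 ->
  is_C1 F -> is_lift F ->
  rate_conditions_0 F Rr L ->
  inD Rr z1 -> inD Rr z2 ->
  Js z2 L^-1 z1 -> Js (F z2) L^-1 (F z1) ->
  enorm ((F z1).2 - (F z2).2) <= mu_s1 F Rr L * enorm (z1.2 - z2.2).
Proof.
move=> _ _ _ Rr_gt0 Rr_lt L_gt _ C1F liftF _ z1D z2D [k [_ cone_z1]] _.
have L_gt0 : 0 < L by apply: lt_trans L_gt; rewrite divr_gt0 ?mulr_gt0.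
have Rr_le1 : Rr <= 1 by lra.
pose d := translate k z1 - z2.
have derFy t : derivable (fun w => (F w).2) (t *: d + z2) d.
  by have [] := is_derive_snd (diff_derivable (v := d) (C1F.1 (t *: d + z2))).
have [xi xi01 mvt] := enorm_sub_le_derive (fun t => is_derive_line (derFy t)).
set q := xi *: d + z2 in mvt.
have qD : inD Rr q by apply: inD_segment; rewrite ?ltW //; case/andP: xi01.
move: mvt; rewrite scale1r scale0r add0r subrK lift_snd // => mvt.
apply: le_trans mvt _; apply: le_trans (enorm_derive_snd_le d (C1F.1 q)) _.
have rate := local_rate_le_mu_s1 C1F liftF Rr_le1 (ltW L_gt0) qD.
have cone : enorm (row_mx d.1.1 d.1.2) <= L^-1 * enorm d.2 := cone_z1.
have := opnorm_ge0 (dy_fy F q); have := opnorm_ge0 (dlx_fy F q).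
have := enorm_ge0 d.2.
rewrite -[z1.2 - z2.2]/d.2; nra.
Qed.
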